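(* Let $\nu=\sum_{i=1}^kw_i\delta_{\mu_i}$ and $\hat\nu=\sum_{i=1}^k\hat w_i\delta_{\hat\mu_i}$ be probability distributions on $\mathbb{R}$, and suppose $W_1(\nu,\hat\nu)<\epsilon$. Let \[\epsilon_1=\min\{|\mu_i-\mu_j|,|\hat\mu_i-\hat\mu_j|:1\le i<j\le k\},\qquad \epsilon_2=\min\{w_i,\hat w_i:i\in[k]\}.\] If $\epsilon<\epsilon_1\epsilon_2/4$, then there exists a permutation $\Pi$ such that \[\|\mu-\Pi\hat\mu\|_\infty<\epsilon/\epsilon_2,\qquad \|w-\Pi\hat w\|_\infty<2\epsilon/\epsilon_1,\] where $\mu=(\mu_1,\dots,\mu_k)$, $w=(w_1,\dots,w_k)$, and $\hat\mu,\hat w$ are defined analogously.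
   Context: $W_1$ is the 1-Wasserstein distance: $W_1(\nu,\nu')=\inf\mathbb{E}|X-Y|$ over couplings with $X\sim\nu$, $Y\sim\nu'$. *)

From HB Require Import structures.
From mathcomp Require Import all_boot all_order all_algebra all_fingroup.
From mathcomp Require Import all_classical all_reals.
Set Implicit Arguments. Unset Strict Implicit. Unset Printing Implicit Defensive.
Import Order.TTheory GRing.Theory Num.Theory.
Local Open Scope ring_scope.
Local Open Scope classical_set_scope.

(* Finitely supported distribution nu = sum_i w i delta_{mu i} on R,
   atoms indexed by 'I_k. *)

Definition is_prob_weights (R : realType) (k : nat) (w : 'I_k -> R) : Prop :=
  (forall i, 0 <= w i) /\ \sum_(i < k) w i = 1.

Definition is_coupling (R : realType) (k : nat) (w wh : 'I_k -> R)
    (P : 'I_k -> 'I_k -> R) : Prop :=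
  [/\ forall i j, 0 <= P i j,
      forall i, \sum_(j < k) P i j = w i &
      forall j, \sum_(i < k) P i j = wh j].

Definition coupling_cost (R : realType) (k : nat) (mu muh : 'I_k -> R)
    (P : 'I_k -> 'I_k -> R) : R :=
  \sum_(i < k) \sum_(j < k) P i j * `|mu i - muh j|.

Definition W1 (R : realType) (k : nat) (w : 'I_k -> R) (mu : 'I_k -> R)
    (wh : 'I_k -> R) (muh : 'I_k -> R) : R :=
  inf [set c : R | exists P, is_coupling w wh P /\ c = coupling_cost mu muh P].

Definition eps1 (R : realType) (k : nat) (mu muh : 'I_k -> R) : R :=
  inf [set d : R | exists i j : 'I_k, (i < j)%N /\
                   (d = `|mu i - mu j| \/ d = `|muh i - muh j|)].

Definition eps2 (R : realType) (k : nat) (w wh : 'I_k -> R) : R :=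
  inf [set d : R | exists i : 'I_k, d = w i \/ d = wh i].

Definition norminf (R : realType) (k : nat) (v : 'I_k -> R) : R :=
  \big[Num.max/0]_(i < k) `|v i|.

From HB Require Import structures.
From mathcomp Require Import all_boot all_order all_algebra all_fingroup.
From mathcomp Require Import all_classical all_reals.
From mathcomp Require Import lra.

Set Implicit Arguments.
Unset Strict Implicit.
Unset Printing Implicit Defensive.
Import Order.TTheory GRing.Theory Num.Theory.
Local Open Scope ring_scope.
Local Open Scope classical_set_scope.

(* Take a coupling [P] of cost [c < eps]. By Markov's inequality on the row of
   an atom [mu i], of mass at least [eps2], some [muh j] lies within
   [d = eps / eps2 <= eps1 / 2] of it; choosing such a [j] for every [i] gives
   a map that is injective because the atoms are [eps1]-separated, hence a
   permutation. Every other atom is then at distance at least [eps1 / 2] from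
   the matched pair, so again by Markov the masses moved off the diagonal
   entry [P i (Pi i)] in its row and in its column are at most [2 c / eps1],
   and [w i - wh (Pi i)] is their difference. *)

Lemma norminf_lt (R : realType) (k : nat) (v : 'I_k -> R) (b : R) :
  0 < b -> (forall i, `|v i| < b) -> norminf v < b.
Proof.
move=> b_gt0 vb; apply: (big_ind (fun x => x < b)) => // x y xb yb.
by rewrite gt_max xb yb.
Qed.

Lemma inf_ge0 (R : realType) (E : set R) :
  (forall x, E x -> 0 <= x) -> 0 <= inf E.
Proof.
move=> E_ge0; have [->|/set0P E_neq0] := eqVneq E set0; first by rewrite inf0.
exact: lb_le_inf.
Qed.

Section SeparationConstants.
Variables (R : realType) (k : nat) (w wh mu muh : 'I_k -> R).

Let eps1_set := [set d : R | exists i j : 'I_k, (i < j)%N /\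
                   (d = `|mu i - mu j| \/ d = `|muh i - muh j|)].

Let eps1_set_lbound : has_lbound eps1_set.
Proof. by exists 0 => d [i [j [_ [->|->]]]]. Qed.

Lemma eps1_ge0 : 0 <= eps1 mu muh.
Proof. by apply: inf_ge0 => d [i [j [_ [->|->]]]]. Qed.

Lemma eps1_le_dist (i j : 'I_k) : i != j ->
  eps1 mu muh <= `|mu i - mu j| /\ eps1 mu muh <= `|muh i - muh j|.
Proof.
rewrite neq_ltn => /orP[] ij.
  by split; apply: (ge_inf eps1_set_lbound); exists i, j; split => //; [left|right].
rewrite (distrC (mu i)) (distrC (muh i)).
by split; apply: (ge_inf eps1_set_lbound); exists j, i; split => //; [left|right].
Qed.

Lemma eps2_ge0 : (forall i, 0 <= w i) -> (forall i, 0 <= wh i) ->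
  0 <= eps2 w wh.
Proof. by move=> w_ge0 wh_ge0; apply: inf_ge0 => d [i [->|->]]. Qed.

Lemma eps2_le_weight (i : 'I_k) :
  (forall i, 0 <= w i) -> (forall i, 0 <= wh i) ->
  eps2 w wh <= w i /\ eps2 w wh <= wh i.
Proof.
move=> w_ge0 wh_ge0.
have lb : has_lbound [set d : R | exists i : 'I_k, d = w i \/ d = wh i].
  by exists 0 => d [j [->|->]].
by split; apply: (ge_inf lb); exists i; [left|right].
Qed.

End SeparationConstants.

Lemma sum_markov (R : numDomainType) (I : finType) (Q : pred I)
    (a b : I -> R) (t : R) :
  (forall j, 0 <= a j) -> (forall j, 0 <= b j) -> (forall j, Q j -> t <= b j) ->
  t * \sum_(j | Q j) a j <= \sum_j a j * b j.
Proof.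
move=> a_ge0 b_ge0 tb; rewrite mulr_sumr (bigID Q predT) /= -[X in X <= _]addr0.
apply: lerD; last by apply: sumr_ge0 => j _; rewrite mulr_ge0.
by apply: ler_sum => j Qj; rewrite mulrC ler_wpM2l ?tb.
Qed.

Lemma half_sep_le_dist (R : realFieldType) (x y z d sep : R) :
  `|x - y| < d -> sep <= `|y - z| -> 2 * d <= sep -> sep / 2 <= `|x - z|.
Proof.
move=> xy sep_yz dsep; have := ler_distD x y z; rewrite (distrC y x).
lra.
Qed.

Lemma near_map_injective (R : realFieldType) (I J : eqType) (x : I -> R)
    (y : J -> R) (sigma : I -> J) (d sep : R) :
  (forall i, `|x i - y (sigma i)| < d) ->
  (forall i i', i != i' -> sep <= `|x i - x i'|) -> 2 * d <= sep ->
  injective sigma.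
Proof.
move=> near sep_x dsep i i' same; apply/eqP/negPn/negP => ii'.
have near_i := near i; rewrite distrC in near_i.
have := half_sep_le_dist near_i (sep_x _ _ ii') dsep.
have := near i'; rewrite -same distrC; lra.
Qed.

Section Coupling.
Variables (R : realType) (k : nat) (w wh mu muh : 'I_k -> R).
Variable P : 'I_k -> 'I_k -> R.
Hypothesis P_coupling : is_coupling w wh P.

Let P_ge0 : forall i j, 0 <= P i j. Proof. by case: P_coupling. Qed.

Let cost := coupling_cost mu muh P.

Lemma coupling_cost_ge0 : 0 <= cost.
Proof. by apply: sumr_ge0 => i _; apply: sumr_ge0 => j _; rewrite mulr_ge0. Qed.

Lemma row_cost_le (i : 'I_k) : \sum_j P i j * `|mu i - muh j| <= cost.
Proof.
rewrite /cost /coupling_cost [X in _ <= X](bigD1 i) //= lerDl.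
by apply: sumr_ge0 => i' _; apply: sumr_ge0 => j _; rewrite mulr_ge0.
Qed.

Lemma col_cost_le (j : 'I_k) : \sum_i P i j * `|mu i - muh j| <= cost.
Proof.
rewrite /cost /coupling_cost exchange_big [X in _ <= X](bigD1 j) //= lerDl.
by apply: sumr_ge0 => j' _; apply: sumr_ge0 => i _; rewrite mulr_ge0.
Qed.

Lemma coupling_near_atom (i : 'I_k) (d : R) :
  cost < w i * d -> exists j, `|mu i - muh j| < d.
Proof.
move=> cost_lt; apply: contrapT => /forallNP far.
have d_le j : d <= `|mu i - muh j| by rewrite leNgt; apply/negP/far.
have := sum_markov (Q := xpredT) (P_ge0 i) (fun j => normr_ge0 _)
  (fun j _ => d_le j).
case: P_coupling => _ -> _; rewrite mulrC => /le_trans/(_ (row_cost_le i)).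
by rewrite leNgt cost_lt.
Qed.

Lemma coupling_weight_gap (i s : 'I_k) (t : R) : 0 <= t ->
  (forall j, j != s -> t <= `|mu i - muh j|) ->
  (forall i', i' != i -> t <= `|mu i' - muh s|) ->
  t * `|w i - wh s| <= cost.
Proof.
move=> t_ge0 row_far col_far; case: P_coupling => _ row col.
set A := \sum_(j | j != s) P i j; set B := \sum_(i' | i' != i) P i' s.
have wA : w i = P i s + A by rewrite -row (bigD1 s).
have whB : wh s = P i s + B by rewrite -col (bigD1 i).
have tA : t * A <= cost.
  exact: le_trans (sum_markov (P_ge0 i) (fun j => normr_ge0 _) row_far)
                  (row_cost_le i).
have tB : t * B <= cost.
  exact: le_trans (sum_markov (P_ge0 ^~ s) (fun j => normr_ge0 _) col_far)
                  (col_cost_le s).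
have A_ge0 : 0 <= A by apply: sumr_ge0.
have B_ge0 : 0 <= B by apply: sumr_ge0.
rewrite wA whB opprD addrACA subrr add0r.
by case: (lerP 0 (A - B)) => AB; [rewrite ger0_norm | rewrite ltr0_norm]; nra.
Qed.

Variables (sep d : R).
Hypothesis sep_mu : forall i i', i != i' -> sep <= `|mu i - mu i'|.
Hypothesis sep_muh : forall j j', j != j' -> sep <= `|muh j - muh j'|.
Hypothesis d_le_half_sep : 2 * d <= sep.

Lemma coupling_perm_near : (forall i, cost < w i * d) ->
  exists Pi : {perm 'I_k}, forall i, `|mu i - muh (Pi i)| < d.
Proof.
move=> cost_lt.
have [sigma sigma_near] := choice (fun i => coupling_near_atom (cost_lt i)).
exists (perm (near_map_injective sigma_near sep_mu d_le_half_sep)) => i.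
by rewrite permE.
Qed.

Lemma near_weight_gap (i s : 'I_k) :
  `|mu i - muh s| < d -> sep / 2 * `|w i - wh s| <= cost.
Proof.
move=> near; have near' : `|muh s - mu i| < d by rewrite distrC.
apply: coupling_weight_gap => [|j js|i' i'i].
- by move: d_le_half_sep (le_lt_trans (normr_ge0 _) near); lra.
- by apply: half_sep_le_dist near (sep_muh _) d_le_half_sep; rewrite eq_sym.
- rewrite distrC; apply: half_sep_le_dist near' (sep_mu _) d_le_half_sep.
  by rewrite eq_sym.
Qed.

End Coupling.

Lemma product_coupling (R : realType) (k : nat) (w wh : 'I_k -> R) :
  is_prob_weights w -> is_prob_weights wh ->
  is_coupling w wh (fun i j => w i * wh j).
Proof.
move=> [w_ge0 w_sum1] [wh_ge0 wh_sum1]; split.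
- by move=> i j; rewrite mulr_ge0.
- by move=> i; rewrite -mulr_sumr wh_sum1 mulr1.
- by move=> j; rewrite -mulr_suml w_sum1 mul1r.
Qed.

Lemma W1_lt_coupling (R : realType) (k : nat) (w mu wh muh : 'I_k -> R) (c : R) :
  is_prob_weights w -> is_prob_weights wh -> W1 w mu wh muh < c ->
  exists2 P, is_coupling w wh P & coupling_cost mu muh P < c.
Proof.
move=> w_prob wh_prob /inf_lt[].
  by exists (coupling_cost mu muh (fun i j => w i * wh j)), (fun i j => w i * wh j);
    split => //; exact: product_coupling.
by move=> _ [P [P_coupling ->]] cost_lt; exists P.
Qed.

Theorem lemma1 (R : realType) (k : nat) (hk : (1 < k)%N)
    (w mu wh muh : 'I_k -> R) (eps : R) :
  is_prob_weights w -> is_prob_weights wh ->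
  W1 w mu wh muh < eps ->
  eps < eps1 mu muh * eps2 w wh / 4 ->
  exists Pi : {perm 'I_k},
    norminf (fun i => mu i - muh (Pi i)) < eps / eps2 w wh /\
    norminf (fun i => w i - wh (Pi i)) < 2 * eps / eps1 mu muh.
Proof.
move=> w_prob wh_prob W1_lt eps_lt.
have [P P_coupling cost_lt] := W1_lt_coupling w_prob wh_prob W1_lt.
have [[w_ge0 _] [wh_ge0 _]] := (w_prob, wh_prob).
set e1 := eps1 mu muh in eps_lt *; set e2 := eps2 w wh in eps_lt *.
set cost := coupling_cost mu muh P in cost_lt.
have cost_ge0 : 0 <= cost := coupling_cost_ge0 mu muh P_coupling.
have e1_gt0 : 0 < e1.
  by rewrite lt0r eps1_ge0 andbT; apply: contraTneq eps_lt => ->; lra.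
have e2_gt0 : 0 < e2.
  by rewrite lt0r eps2_ge0 // andbT; apply: contraTneq eps_lt => ->; lra.
have sep_mu i i' : i != i' -> e1 <= `|mu i - mu i'| by case/(eps1_le_dist mu muh).
have sep_muh j j' : j != j' -> e1 <= `|muh j - muh j'| by case/(eps1_le_dist mu muh).
set d := eps / e2.
have d_le_half_e1 : 2 * d <= e1 by rewrite /d mulrA ler_pdivrMr // mulrC; lra.
have cost_lt_mass i : cost < w i * d.
  have [e2_le_w _] := eps2_le_weight i w_ge0 wh_ge0.
  by apply: (lt_le_trans cost_lt); rewrite mulrA ler_pdivlMr //; nra.
have [Pi Pi_near] := coupling_perm_near P_coupling sep_mu d_le_half_e1 cost_lt_mass.
exists Pi; split.
  by apply: norminf_lt => [|i]; [rewrite divr_gt0 //; lra | exact: Pi_near].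
apply: norminf_lt => [|i]; first by rewrite divr_gt0 //; lra.
have gap : e1 / 2 * `|w i - wh (Pi i)| <= cost :=
  near_weight_gap P_coupling sep_mu sep_muh d_le_half_e1 (Pi_near i).
by rewrite ltr_pdivlMr //; lra.
Qed.
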